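(* Let $h:H\to K$ be an isomorphism between subgroups $K\subset H$ of a group $G$, and suppose there is $z\in H$ commuting with every element of $K$ such that $z^2\notin K$. Let $\mathcal F\subset\mathcal P_G$ be an $h$-invariant left-invariant ideal. If $A\subset H$ and $A\in\tau^\alpha(\mathcal F)$ for some ordinal $\alpha$, then $h(A)\cup z\,h(A)\in\tau^{\alpha+1}(\mathcal F)$.
   Context: $\mathcal F$ is $h$-invariant if for every $A\subset H$: $A\in\mathcal F$ iff $h(A)\in\mathcal F$. An ideal is closed under subsets and finite unions; left-invariant: $xF\in\mathcal F$ for $F\in\mathcal F$, $x\in G$. $\tau(\mathcal F)=\{A\subset G: xA\cap yA\in\mathcal F$ for all distinct $x,y\in G\}$, $\tau^0(\mathcal F)=\mathcal F$, $\tau^{<\alpha}(\mathcal F)=\bigcup_{\beta<\alpha}\tau^\beta(\mathcal F)$, $\tau^\alpha(\mathcal F)=\tau(\tau^{<\alpha}(\mathcal F))$ for $\alpha>0$. *)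

From Stdlib Require Import Classical.

Definition is_group {G : Type} (mul : G -> G -> G) (e : G) (inv : G -> G) : Prop :=
  (forall a b c, mul a (mul b c) = mul (mul a b) c) /\
  (forall a, mul e a = a /\ mul a e = a) /\
  (forall a, mul (inv a) a = e /\ mul a (inv a) = e).

Definition is_subgroup {G : Type} (mul : G -> G -> G) (e : G) (inv : G -> G)
  (S : G -> Prop) : Prop :=
  S e /\ (forall a b, S a -> S b -> S (mul a b)) /\ (forall a, S a -> S (inv a)).

Definition subset {G : Type} (A B : G -> Prop) : Prop := forall g, A g -> B g.
Definition union {G : Type} (A B : G -> Prop) : G -> Prop := fun g => A g \/ B g.
Definition inter {G : Type} (A B : G -> Prop) : G -> Prop := fun g => A g /\ B g.
Definition emptyset {G : Type} : G -> Prop := fun _ => False.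

Definition lmul {G : Type} (mul : G -> G -> G) (x : G) (A : G -> Prop) : G -> Prop :=
  fun g => exists a, A a /\ g = mul x a.

Definition image {G : Type} (h : G -> G) (A : G -> Prop) : G -> Prop :=
  fun g => exists a, A a /\ g = h a.

Definition is_group_iso {G : Type} (mul : G -> G -> G) (H K : G -> Prop)
  (h : G -> G) : Prop :=
  (forall a, H a -> K (h a)) /\
  (forall a b, H a -> H b -> h (mul a b) = mul (h a) (h b)) /\
  (forall a b, H a -> H b -> h a = h b -> a = b) /\
  (forall k, K k -> exists a, H a /\ h a = k).

Definition h_invariant {G : Type} (H : G -> Prop) (h : G -> G)
  (F : (G -> Prop) -> Prop) : Prop :=
  forall A, subset A H -> (F A <-> F (image h A)).

Definition is_ideal {G : Type} (F : (G -> Prop) -> Prop) : Prop :=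
  F emptyset /\
  (forall A B, F A -> subset B A -> F B) /\
  (forall A B, F A -> F B -> F (union A B)).

Definition left_invariant {G : Type} (mul : G -> G -> G)
  (F : (G -> Prop) -> Prop) : Prop :=
  forall A x, F A -> F (lmul mul x A).

Definition tau {G : Type} (mul : G -> G -> G) (X : (G -> Prop) -> Prop)
  : (G -> Prop) -> Prop :=
  fun A => forall x y, x <> y -> X (inter (lmul mul x A) (lmul mul y A)).

(* Ordinals are represented as elements of a strict well-order (I, R). *)
Definition strict_well_order {I : Type} (R : I -> I -> Prop) : Prop :=
  well_founded R /\
  (forall a b c, R a b -> R b c -> R a c) /\
  (forall a b, R a b \/ a = b \/ R b a).

Definition is_succ {I : Type} (R : I -> I -> Prop) (a b : I) : Prop :=
  R a b /\ forall c, R a c -> c = b \/ R b c.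

(* tau_level mul F R i A  <->  A ∈ tau^i(F), where
   tau^0(F) = F (i minimal),
   tau^i(F) = tau(tau^{<i}(F)) for i > 0, tau^{<i}(F) = ⋃_{j<i} tau^j(F). *)
Inductive tau_level {G I : Type} (mul : G -> G -> G) (F : (G -> Prop) -> Prop)
  (R : I -> I -> Prop) : I -> (G -> Prop) -> Prop :=
| tau_level_zero : forall i A,
    (forall j, ~ R j i) -> F A -> tau_level mul F R i A
| tau_level_pos : forall i A,
    (exists j, R j i) ->
    (forall x y, x <> y ->
       exists j, R j i /\ tau_level mul F R j (inter (lmul mul x A) (lmul mul y A))) ->
    tau_level mul F R i A.

From Stdlib Require Import Classical.

(* Put B = h(A) ∪ z h(A). For x ≠ y and g = x⁻¹y we have xB ∩ yB = x(B ∩ gB), so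
   it suffices to place B ∩ gB at level α for every g ≠ 1.  Because z commutes
   with K and z² ∉ K, at most one of g, gz and z⁻¹g lies in K, and this decides
   which of the two pieces of B can meet which piece of gB.  If g = h(a) ∈ K, then
   B ∩ gB is contained in the set built in the same way from A ∩ aA, which lies
   strictly below α, so induction on α applies; if g ∉ K, then B ∩ gB is contained
   in h(A) or in z h(A), both at level α by h-invariance and left invariance. *)

Section Groups.

Variables (G : Type) (mul : G -> G -> G) (e : G) (inv : G -> G).
Hypothesis HG : is_group mul e inv.

Lemma mulgA a b c : mul a (mul b c) = mul (mul a b) c.
Proof. exact (proj1 HG a b c). Qed.

Lemma mul1g a : mul e a = a.
Proof. exact (proj1 (proj1 (proj2 HG) a)). Qed.

Lemma mulg1 a : mul a e = a.
Proof. exact (proj2 (proj1 (proj2 HG) a)). Qed.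

Lemma mulVg a : mul (inv a) a = e.
Proof. exact (proj1 (proj2 (proj2 HG) a)). Qed.

Lemma mulgV a : mul a (inv a) = e.
Proof. exact (proj2 (proj2 (proj2 HG) a)). Qed.

Lemma mulKg a b : mul (inv a) (mul a b) = b.
Proof. now rewrite mulgA, mulVg, mul1g. Qed.

Lemma mulgK a b : mul (mul b a) (inv a) = b.
Proof. now rewrite <- mulgA, mulgV, mulg1. Qed.

Lemma mulg_cancel_l a b c : mul a b = mul a c -> b = c.
Proof. intro E. now rewrite <- (mulKg a b), E, mulKg. Qed.

Lemma mulg_cancel_r a b c : mul b a = mul c a -> b = c.
Proof. intro E. now rewrite <- (mulgK a b), E, mulgK. Qed.

Lemma inv_mul_neq1 x y : x <> y -> mul (inv x) y <> e.
Proof.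
  intros Hxy E. apply Hxy.
  now rewrite <- (mulg1 x), <- E, mulgA, mulgV, mul1g.
Qed.

Section Subgroup.

Variable S : G -> Prop.
Hypothesis HS : is_subgroup mul e inv S.

Lemma mem_subgroup_mulr v k : S k -> S (mul v k) -> S v.
Proof.
  destruct HS as [_ [Smul Sinv]]. intros Sk Svk.
  rewrite <- (mulgK k v). auto.
Qed.

Lemma mem_subgroup_mull v k : S k -> S (mul k v) -> S v.
Proof.
  destruct HS as [_ [Smul Sinv]]. intros Sk Skv.
  rewrite <- (mulKg k v). auto.
Qed.

End Subgroup.

Section TauLevels.

Variables (I : Type) (R : I -> I -> Prop) (F : (G -> Prop) -> Prop).
Hypothesis Rwf : well_founded R.
Hypothesis Fid : is_ideal F.
Hypothesis Flinv : left_invariant mul F.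

Notation level := (tau_level mul F R).

Lemma tau_level_subset i A B : level i A -> subset B A -> level i B.
Proof.
  revert A B. induction i as [i IH] using (well_founded_ind Rwf).
  intros A B HA SB. inversion HA as [? ? Hmin FA | ? ? Hpos Hint]; subst.
  - apply tau_level_zero; auto. exact (proj1 (proj2 Fid) A B FA SB).
  - apply tau_level_pos; auto. intros x y Hxy.
    destruct (Hint x y Hxy) as [j [Rj Hj]]. exists j. split; auto.
    apply (IH j Rj _ _ Hj). intros w [[b1 [Hb1 E1]] [b2 [Hb2 E2]]].
    split; [exists b1 | exists b2]; auto.
Qed.

Lemma tau_level_empty i : level i emptyset.
Proof.
  induction i as [i IH] using (well_founded_ind Rwf).
  destruct (classic (exists j, R j i)) as [[j Rj] | Hmin].
  - apply tau_level_pos; [now exists j |]. intros x y _. exists j. split; auto.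
    apply (tau_level_subset j emptyset); auto. intros w [[a [[] _]] _].
  - apply tau_level_zero; [| apply Fid]. intros j Rj. apply Hmin. now exists j.
Qed.

Lemma tau_level_minimal i A : level i A -> ~ (exists j, R j i) -> F A.
Proof.
  intros HA Hmin. inversion HA as [? ? _ FA | ? ? Hpos _]; subst; auto.
  contradiction.
Qed.

Lemma tau_level_lmul i A g : level i A -> level i (lmul mul g A).
Proof.
  intro HA. inversion HA as [? ? Hmin FA | ? ? Hpos Hint]; subst.
  - apply tau_level_zero; auto.
  - apply tau_level_pos; auto. intros x y Hxy.
    assert (Hxgyg : mul x g <> mul y g).
    { intro E. apply Hxy. exact (mulg_cancel_r g x y E). }
    destruct (Hint _ _ Hxgyg) as [j [Rj Hj]]. exists j. split; auto.
    apply (tau_level_subset j _ _ Hj).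
    intros w [[c1 [[a1 [Ha1 ->]] ->]] [c2 [[a2 [Ha2 ->]] E]]].
    split; [exists a1 | exists a2]; split; auto.
    + apply mulgA.
    + rewrite E. apply mulgA.
Qed.

(* [xB ∩ yB ⊆ x(B ∩ x⁻¹yB)]: the levels of tau only see the sets [B ∩ gB], [g ≠ 1]. *)
Lemma tau_level_intro i B :
  (exists j, R j i) ->
  (forall g, g <> e -> exists j, R j i /\ level j (inter B (lmul mul g B))) ->
  level i B.
Proof.
  intros Hpos Hint. apply tau_level_pos; auto. intros x y Hxy.
  destruct (Hint _ (inv_mul_neq1 x y Hxy)) as [j [Rj Hj]]. exists j. split; auto.
  apply (tau_level_subset j _ _ (tau_level_lmul j _ x Hj)).
  intros w [[b1 [Hb1 ->]] [b2 [Hb2 E]]].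
  exists b1. split; auto. split; auto. exists b2. split; auto.
  now rewrite <- (mulKg x b1), E, mulgA.
Qed.

Lemma tau_level_elim i A : level i A -> (exists j, R j i) ->
  forall g, g <> e -> exists j, R j i /\ level j (inter A (lmul mul g A)).
Proof.
  intros HA Hpos g Hg. inversion HA as [? ? Hmin _ | ? ? _ Hint]; subst.
  - destruct Hpos as [j0 Rj0]. now destruct (Hmin j0).
  - destruct (Hint e g (not_eq_sym Hg)) as [j [Rj Hj]]. exists j. split; auto.
    apply (tau_level_subset j _ _ Hj). intros w [Hw Hgw]. split; auto.
    exists w. split; auto. now rewrite mul1g.
Qed.

Section Isomorphism.

Variables (H K : G -> Prop) (h : G -> G).
Hypotheses (HH : is_subgroup mul e inv H) (HK : is_subgroup mul e inv K).
Hypothesis Hh : is_group_iso mul H K h.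
Hypothesis Finv : h_invariant H h F.

Lemma iso_mem a : H a -> K (h a).
Proof. exact (proj1 Hh a). Qed.

Lemma iso_unit : h e = e.
Proof.
  destruct HH as [He _]. destruct Hh as [_ [hmul _]].
  apply (mulg_cancel_l (h e)). rewrite <- hmul, mul1g, mulg1; auto.
Qed.

Lemma iso_preimage_neq1 g : K g -> g <> e -> exists a, H a /\ h a = g /\ a <> e.
Proof.
  intros Kg Hg. destruct (proj2 (proj2 (proj2 Hh)) g Kg) as [a [Ha <-]].
  exists a. repeat split; auto. intros ->. apply Hg. exact iso_unit.
Qed.

Lemma iso_translate a0 a1 a2 : H a0 -> H a1 -> H a2 ->
  h a1 = mul (h a0) (h a2) -> a1 = mul a0 a2.
Proof.
  destruct HH as [_ [Hmul _]]. destruct Hh as [_ [hmul [hinj _]]].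
  intros. apply hinj; auto. rewrite hmul; auto.
Qed.

Lemma image_inter_translate C a0 : subset C H -> H a0 ->
  subset (inter (image h C) (lmul mul (h a0) (image h C)))
         (image h (inter C (lmul mul a0 C))).
Proof.
  intros CH Ha0 w [[a1 [Ca1 ->]] [w2 [[a2 [Ca2 ->]] E]]].
  exists a1. split; auto. split; auto. exists a2. split; auto.
  apply iso_translate; auto.
Qed.

Lemma image_inter_translate_notin C g : subset C H -> ~ K g ->
  subset (inter (image h C) (lmul mul g (image h C))) emptyset.
Proof.
  intros CH Kg w [[a1 [Ca1 ->]] [w2 [[a2 [Ca2 ->]] E]]]. apply Kg.
  apply (mem_subgroup_mulr K HK g (h a2)); [apply iso_mem; auto |].
  rewrite <- E. apply iso_mem; auto.
Qed.

Lemma tau_level_image i C : subset C H -> level i C -> level i (image h C).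
Proof.
  revert C. induction i as [i IH] using (well_founded_ind Rwf). intros C CH HC.
  destruct (classic (exists j, R j i)) as [Hpos | Hmin].
  - apply tau_level_intro; auto. intros g Hg.
    destruct (classic (K g)) as [Kg | nKg].
    + destruct (iso_preimage_neq1 g Kg Hg) as [a0 [Ha0 [<- Ha0e]]].
      destruct (tau_level_elim i C HC Hpos a0 Ha0e) as [j [Rj Hj]].
      exists j. split; auto.
      apply (tau_level_subset j (image h (inter C (lmul mul a0 C)))).
      * apply IH; auto. intros w [Cw _]. auto.
      * apply image_inter_translate; auto.
    + destruct Hpos as [j Rj]. exists j. split; auto.
      apply (tau_level_subset j _ _ (tau_level_empty j)).
      apply image_inter_translate_notin; auto.
  - apply tau_level_zero.
    + intros j Rj. apply Hmin. now exists j.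
    + apply (Finv C CH). exact (tau_level_minimal i C HC Hmin).
Qed.

Section Twin.

Variable z : G.
Hypothesis zcomm : forall k, K k -> mul z k = mul k z.
Hypothesis z2 : ~ K (mul z z).

Definition twin A := union (image h A) (lmul mul z (image h A)).

Lemma notin_z : ~ K z.
Proof. intro Kz. apply z2. now apply HK. Qed.

Lemma notin_mulgz g : K g -> ~ K (mul g z).
Proof. intros Kg Kgz. apply notin_z. exact (mem_subgroup_mull K HK z g Kg Kgz). Qed.

Section Points.

Variables (g : G) (a1 a2 : G).
Hypotheses (Ha1 : H a1) (Ha2 : H a2).

Lemma in_of_eq_hh : h a1 = mul g (h a2) -> K g.
Proof.
  intro E. apply (mem_subgroup_mulr K HK g (h a2)); [apply iso_mem; auto |].
  rewrite <- E. apply iso_mem; auto.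
Qed.

Lemma in_of_eq_hzh : h a1 = mul g (mul z (h a2)) -> K (mul g z).
Proof.
  intro E. apply (mem_subgroup_mulr K HK _ (h a2)); [apply iso_mem; auto |].
  rewrite <- mulgA, <- E. apply iso_mem; auto.
Qed.

(* Here [g = z k] with [k ∈ K], so [g ∈ K] forces [z ∈ K] and [gz = z²k] forces [z² ∈ K]. *)
Lemma notin_of_eq_zhh : mul z (h a1) = mul g (h a2) -> ~ K g /\ ~ K (mul g z).
Proof.
  intro E. split; intro Kg.
  - apply notin_z. apply (mem_subgroup_mulr K HK z (h a1)); [apply iso_mem; auto |].
    rewrite E. apply HK; auto. apply iso_mem; auto.
  - apply z2. apply (mem_subgroup_mulr K HK _ (h a1)); [apply iso_mem; auto |].
    assert (Ezz : mul (mul z z) (h a1) = mul (mul g z) (h a2)).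
    { assert (K1 : K (h a1)) by (apply iso_mem; auto).
      assert (K2 : K (h a2)) by (apply iso_mem; auto).
      rewrite <- mulgA, (zcomm (h a1) K1), mulgA, E, <- !mulgA, (zcomm (h a2) K2).
      reflexivity. }
    rewrite Ezz. apply HK; auto. apply iso_mem; auto.
Qed.

Lemma eq_hh_of_eq_zhzh : mul z (h a1) = mul g (mul z (h a2)) -> h a1 = mul g (h a2).
Proof.
  intro E. apply (mulg_cancel_r z).
  rewrite <- zcomm, E, zcomm, mulgA; auto; apply iso_mem; auto.
Qed.

End Points.

Lemma twin_inter_translate_in A a0 : subset A H -> H a0 ->
  subset (inter (twin A) (lmul mul (h a0) (twin A))) (twin (inter A (lmul mul a0 A))).
Proof.
  intros AH Ha0 w [Hw1 [w2 [Hw2 E]]].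
  assert (Kg : K (h a0)) by (apply iso_mem; auto).
  destruct Hw1 as [[a1 [Aa1 ->]] | [c1 [[a1 [Aa1 ->]] ->]]];
  destruct Hw2 as [[a2 [Aa2 ->]] | [c2 [[a2 [Aa2 ->]] ->]]].
  - left. exists a1. split; auto. split; auto. exists a2. split; auto.
    apply iso_translate; auto.
  - destruct (notin_mulgz _ Kg). apply (in_of_eq_hzh _ a1 a2); auto.
  - destruct (notin_of_eq_zhh (h a0) a1 a2 (AH a1 Aa1) (AH a2 Aa2) E). contradiction.
  - right. exists (h a1). split; auto. exists a1. split; auto. split; auto.
    exists a2. split; auto. apply iso_translate; auto.
    apply eq_hh_of_eq_zhzh; auto.
Qed.

Lemma twin_inter_translate_notin A g : subset A H -> ~ K g ->
  subset (inter (twin A) (lmul mul g (twin A))) (image h A) \/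
  subset (inter (twin A) (lmul mul g (twin A))) (lmul mul z (image h A)).
Proof.
  intros AH nKg.
  destruct (classic (K (mul g z))) as [Kgz | nKgz]; [left | right];
  intros w [Hw1 [w2 [Hw2 E]]];
  destruct Hw1 as [[a1 [Aa1 ->]] | [c1 [[a1 [Aa1 ->]] ->]]];
  destruct Hw2 as [[a2 [Aa2 ->]] | [c2 [[a2 [Aa2 ->]] ->]]];
  try solve [exfalso; apply nKg; apply (in_of_eq_hh _ a1 a2); auto;
             apply eq_hh_of_eq_zhzh; auto].
  - now exists a1.
  - destruct (notin_of_eq_zhh g a1 a2 (AH a1 Aa1) (AH a2 Aa2) E). contradiction.
  - destruct nKgz. apply (in_of_eq_hzh _ a1 a2); auto.
  - exists (h a1). split; auto. now exists a1.
Qed.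

Lemma tau_level_twin a A : subset A H -> level a A -> forall b, R a b -> level b (twin A).
Proof.
  revert A. induction a as [a IH] using (well_founded_ind Rwf). intros A AH HA b Rab.
  apply tau_level_intro; [now exists a |]. intros g Hg. exists a. split; auto.
  destruct (classic (exists j, R j a)) as [Hpos | Hmin].
  - destruct (classic (K g)) as [Kg | nKg].
    + destruct (iso_preimage_neq1 g Kg Hg) as [a0 [Ha0 [<- Ha0e]]].
      destruct (tau_level_elim a A HA Hpos a0 Ha0e) as [j [Rj Hj]].
      apply (tau_level_subset a (twin (inter A (lmul mul a0 A)))).
      * apply (IH j Rj); auto. intros w [Aw _]. auto.
      * apply twin_inter_translate_in; auto.
    + pose proof (tau_level_image a A AH HA) as HhA.
      destruct (twin_inter_translate_notin A g AH nKg) as [Sub | Sub].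
      * exact (tau_level_subset a _ _ HhA Sub).
      * exact (tau_level_subset a _ _ (tau_level_lmul a _ z HhA) Sub).
  - apply (tau_level_subset a (twin A)); [| intros w [Hw _]; exact Hw].
    apply tau_level_zero; [intros j Rj; apply Hmin; now exists j |].
    assert (FhA : F (image h A)) by (apply (Finv A AH); exact (tau_level_minimal a A HA Hmin)).
    apply Fid; auto.
Qed.

End Twin.
End Isomorphism.
End TauLevels.
End Groups.

Theorem lemma6p3 (G : Type) (mul : G -> G -> G) (e : G) (inv : G -> G)
  (HG : is_group mul e inv)
  (H K : G -> Prop)
  (HH : is_subgroup mul e inv H) (HK : is_subgroup mul e inv K)
  (KH : subset K H)
  (h : G -> G) (Hh : is_group_iso mul H K h)
  (z : G) (Hz : H z) (zcomm : forall k, K k -> mul z k = mul k z)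
  (z2 : ~ K (mul z z))
  (F : (G -> Prop) -> Prop)
  (Finv : h_invariant H h F) (Flinv : left_invariant mul F) (Fid : is_ideal F)
  (I : Type) (R : I -> I -> Prop) (HR : strict_well_order R)
  (alpha alpha1 : I) (Hsucc : is_succ R alpha alpha1)
  (A : G -> Prop) (AH : subset A H)
  (HA : tau_level mul F R alpha A) :
  tau_level mul F R alpha1 (union (image h A) (lmul mul z (image h A))).
Proof.
  exact (tau_level_twin G mul e inv HG I R F (proj1 HR) Fid Flinv H K h HH HK Hh Finv
           z zcomm z2 alpha A AH HA alpha1 (proj1 Hsucc)).
Qed.
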